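(* An integral domain $D$ is a quasilocal API-domain if and only if for each nonempty subset $\{a_\alpha\}_{\alpha\in\Lambda}$ of $D\setminus\{0\}$ there exist a natural number $n$ and $\alpha_0\in\Lambda$ with $a_{\alpha_0}^n\mid a_\alpha^n$ for every $\alpha\in\Lambda$.
   Context: Quasilocal: having a unique maximal ideal. An integral domain $D$ is an API-domain if for every nonempty subset $\{d_\alpha\}_{\alpha\in\Lambda}$ of $D\setminus\{0\}$ there is a natural number $n$ such that the ideal generated by $\{d_\alpha^n\}_{\alpha\in\Lambda}$ is principal. *)

From mathcomp Require Import all_boot all_algebra.
Set Implicit Arguments. Unset Strict Implicit. Unset Printing Implicit Defensive.
Import GRing.Theory.
Local Open Scope ring_scope.

Definition is_ideal (D : idomainType) (I : D -> Prop) : Prop :=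
  I 0 /\ (forall x y, I x -> I y -> I (x + y)) /\ (forall r x, I x -> I (r * x)).

Definition ideal_gen (D : idomainType) (T : D -> Prop) : D -> Prop :=
  fun x => forall I : D -> Prop, is_ideal I -> (forall t, T t -> I t) -> I x.

Definition principal (D : idomainType) (I : D -> Prop) : Prop :=
  exists g : D, forall x, I x <-> exists r : D, x = r * g.

Definition maximal_ideal (D : idomainType) (M : D -> Prop) : Prop :=
  is_ideal M /\ ~ M 1 /\
  forall J : D -> Prop, is_ideal J -> (forall x, M x -> J x) ->
    (forall x, J x <-> M x) \/ J 1.

Definition quasilocal (D : idomainType) : Prop :=
  exists M : D -> Prop, maximal_ideal M /\
    forall N : D -> Prop, maximal_ideal N -> forall x, N x <-> M x.

Definition divides (D : idomainType) (a b : D) : Prop := exists c : D, b = c * a.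

Definition nonempty_nonzero_subset (D : idomainType) (S : D -> Prop) : Prop :=
  (exists d, S d) /\ (forall d, S d -> d != 0).

Definition API_domain (D : idomainType) : Prop :=
  forall S : D -> Prop, nonempty_nonzero_subset S ->
    exists n : nat, (0 < n)%N /\
      principal (ideal_gen (fun x => exists d, S d /\ x = d ^+ n)).

(* A domain is quasilocal exactly when its nonunits form an ideal.  Then, if the
   n-th powers of the elements of S generate a principal ideal (g), some a0^n is a
   unit multiple of g: otherwise g would lie in (nonunits) * g, and cancelling g
   would make 1 a nonunit.  Conversely, apply the hypothesis to {a, 1 - a}: if
   a + b = 1 and a^n divides b^n, then a is a unit, because 1 - b^n is a multiple
   of 1 - b = a.  Hence a or 1 - a is a unit for every a, so the nonunits form an
   ideal, and a0^n generates the ideal of the n-th powers. *)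

From mathcomp Require Import all_boot all_algebra.
From mathcomp Require Import boolp classical_sets.
Set Implicit Arguments. Unset Strict Implicit. Unset Printing Implicit Defensive.
Import GRing.Theory.
Local Open Scope classical_set_scope.
Local Open Scope ring_scope.

Definition proper_ideal (D : idomainType) (I : D -> Prop) : Prop :=
  is_ideal I /\ ~ I 1.

Definition nonunits (D : idomainType) : D -> Prop :=
  fun x => x \isn't a GRing.unit.

Definition power_divisor_property (D : idomainType) : Prop :=
  forall S : D -> Prop, nonempty_nonzero_subset S ->
    exists n : nat, (0 < n)%N /\
      exists a0 : D, S a0 /\ forall a : D, S a -> divides (a0 ^+ n) (a ^+ n).

Section Ideals.
Variable D : idomainType.
Implicit Types (I J M : D -> Prop) (a g x : D).

Lemma is_ideal_ext I J : (forall x, I x <-> J x) -> is_ideal I -> is_ideal J.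
Proof.
move=> IJ [I0 [ID IM]]; split; first exact/IJ.
by split=> [x y /IJ Ix /IJ Iy | r x /IJ Ix]; apply/IJ; auto.
Qed.

Lemma divides_ideal a : is_ideal (divides a).
Proof.
split; first by exists 0; rewrite mul0r.
split=> [_ _ [c ->] [d ->] | r _ [c ->]]; first by exists (c + d); rewrite mulrDl.
by exists (r * c); rewrite mulrA.
Qed.

Lemma is_ideal_mulr I g : is_ideal I -> is_ideal (fun x => exists2 r, I r & x = r * g).
Proof.
move=> [I0 [ID IM]]; split; first by exists 0; rewrite ?mul0r.
split=> [_ _ [c Ic ->] [d Id ->] | r _ [c Ic ->]].
  by exists (c + d); rewrite ?mulrDl //; apply: ID.
by exists (r * c); rewrite ?mulrA //; apply: IM.
Qed.

Lemma ideal_unit_full I u : is_ideal I -> I u -> u \is a GRing.unit -> I 1.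
Proof. by move=> [_ [_ IM]] Iu uU; rewrite -(mulVr uU); apply: IM. Qed.

Lemma ideal_gen_principal (T : D -> Prop) a :
  T a -> (forall t, T t -> divides a t) -> forall x, ideal_gen T x <-> divides a x.
Proof.
move=> Ta aT x; split; first by apply; [apply: divides_ideal | apply: aT].
by move=> [c ->] I [_ [_ IM]] TI; apply/IM/TI.
Qed.

Lemma is_ideal_bigcup (K : Type) (P : set K) (F : K -> D -> Prop) :
  (P !=set0) -> (forall i, P i -> is_ideal (F i)) ->
  (forall i j, P i -> P j -> (F i `<=` F j) \/ (F j `<=` F i)) ->
  is_ideal (\bigcup_(i in P) F i).
Proof.
move=> [i0 Pi0] FI Ftot; split; first by exists i0; last by case: (FI i0 Pi0).
split=> [x y [i Pi Fx] [j Pj Fy] | r x [i Pi Fx]]; last first.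
  by exists i => //; case: (FI i Pi) => _ [_]; apply.
have [ij|ji] := Ftot i j Pi Pj.
  by exists j => //; case: (FI j Pj) => _ [+ _]; apply; first exact: ij.
by exists i => //; case: (FI i Pi) => _ [+ _]; apply; last exact: ji.
Qed.

(* Zorn's lemma is applied to the sets [X] with [X `|` I] proper, so that the
   empty chain, whose union is [set0], stays admissible. *)
Lemma proper_ideal_sub_maximal I :
  proper_ideal I -> exists2 M, maximal_ideal M & forall x, I x -> M x.
Proof.
move=> [II nI1]; pose P X := proper_ideal (X `|` I).
have [A [[AI nA1] Amax]] : exists A, P A /\ forall B, (A `<` B) -> ~ P B.
  apply: Zorn_bigcup => F FP Ftot; have [->|F0] := eqVneq F set0.
    by rewrite /P bigcup_set0 set0U.
  have {}F0 : (F !=set0) by apply/set0P.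
  rewrite /P -bigcupUl //; split.
    apply: is_ideal_bigcup => // [X /FP [] //|X Y FX FY].
    by have [XY|YX] := Ftot X Y FX FY; [left|right]; apply: setSU.
  by move=> [X /FP [_ X1] ?]; apply: X1.
exists (A `|` I) => [|x]; last by right.
split=> //; split=> // J IJ AJ; have [J1|nJ1] := pselect (J 1); first by right.
have [JA|nJA] := pselect (J `<=` A).
  by left=> x; split=> [/JA|/AJ]; [left|].
exfalso; apply: (Amax J); first by split=> // x Ax; apply: AJ; left.
split; last by case=> // /(AJ _ \o or_intror).
apply: is_ideal_ext IJ => x; split=> [|[]//]; first by left.
by move=> Ix; apply: AJ; right.
Qed.

Lemma quasilocalP : quasilocal D <-> is_ideal (@nonunits D).
Proof.
split=> [[M [[MI [nM1 _]] Muniq]] | NI].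
  apply: is_ideal_ext (MI) => x; split=> [Mx | xN].
    by apply/negP=> xU; exact/nM1/(ideal_unit_full MI Mx xU).
  have [|N NN xN'] := @proper_ideal_sub_maximal (divides x).
    split=> [|[r r1]]; first exact: divides_ideal.
    by move/negP: xN; apply; apply/unitrPr; exists r; rewrite mulrC.
  by apply/(Muniq N NN)/xN'; exists 1; rewrite mul1r.
have nN1 : ~ nonunits (1 : D) by rewrite /nonunits unitr1.
have NM : maximal_ideal (@nonunits D).
  split=> //; split=> // J JI NJ.
  have [[u Ju uU]|noU] := pselect (exists2 u, J u & u \is a GRing.unit).
    by right; apply: ideal_unit_full Ju uU.
  by left=> x; split=> [Jx|/NJ //]; apply/negP=> xU; apply: noU; exists x.
exists (@nonunits D); split=> // M [MI [nM1 Mmax]].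
have MN x : M x -> nonunits x.
  by move=> Mx; apply/negP=> xU; exact/nM1/(ideal_unit_full MI Mx xU).
by case: (Mmax _ NI MN) => // eMN x; split=> [/MN|/eMN].
Qed.

End Ideals.

Section PowerDivisors.
Variable D : idomainType.
Implicit Types (a b g : D) (S T : D -> Prop).

Lemma unit_of_dvdX a b n :
  (0 < n)%N -> a + b = 1 -> divides (a ^+ n) (b ^+ n) -> a \is a GRing.unit.
Proof.
case: n => // n _ ab [c bn]; have Bb : 1 - b = a by rewrite -ab addrK.
apply/unitrPr; exists (\sum_(i < n.+1) 1 ^+ (n - i) * b ^+ i + c * a ^+ n).
by rewrite mulrDr -{1}Bb -subrXX expr1n mulrCA -exprS -bn subrK.
Qed.

Lemma unit_or_unit_subr :
  power_divisor_property D -> forall a, a \is a GRing.unit \/ (1 - a) \is a GRing.unit.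
Proof.
move=> pdp a; have [->|a0] := eqVneq a 0; first by right; rewrite subr0 unitr1.
have [/eqP|a1] := eqVneq (1 - a) 0.
  by rewrite subr_eq0 => /eqP <-; left; exact: unitr1.
have [|n [n0 [_ [[]-> dvd]]]] := pdp (fun x => x = a \/ x = 1 - a).
- by split=> [|_ [->|->] //]; exists a; left.
- by left; apply: unit_of_dvdX n0 _ (dvd _ (or_intror erefl)); rewrite addrC subrK.
- by right; apply: unit_of_dvdX n0 _ (dvd _ (or_introl erefl)); rewrite subrK.
Qed.

Lemma nonunits_ideal :
  (forall a, a \is a GRing.unit \/ (1 - a) \is a GRing.unit) -> is_ideal (@nonunits D).
Proof.
move=> local; split; first by rewrite /nonunits unitr0.
split=> [x y xN yN | r x xN]; last by rewrite /nonunits unitrM negb_and xN orbT.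
apply/negP=> xyU; set u := (x + y)^-1.
have uxy : u * x + u * y = 1 by rewrite -mulrDr mulVr.
have [|] := local (u * x); first by rewrite unitrM (negbTE xN) andbF.
by rewrite -uxy addrAC subrr add0r unitrM (negbTE yN) andbF.
Qed.

Lemma API_of_power_divisor_property : power_divisor_property D -> API_domain D.
Proof.
move=> pdp S SS; have [n [n0 [a0 [Sa0 dvd]]]] := pdp S SS.
exists n; split=> //; exists (a0 ^+ n).
by apply: ideal_gen_principal => [|_ [a [Sa ->]]]; [exists a0 | exact: dvd].
Qed.

Lemma generator_unit_cofactor T g :
  is_ideal (@nonunits D) -> g != 0 -> (forall x, ideal_gen T x <-> divides g x) ->
  exists2 t, T t & exists2 s, s \is a GRing.unit & t = s * g.
Proof.
move=> NI g0 Tg; apply: contrapT => noU.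
have [r rN gr] : exists2 r, nonunits r & g = r * g.
  apply: (proj2 (Tg g)) (is_ideal_mulr g NI) _; first by exists 1; rewrite mul1r.
  move=> t Tt; have [s ts] := proj1 (Tg t) (fun I _ TI => TI t Tt).
  by exists s => //; apply/negP=> sU; apply: noU; exists t => //; exists s.
move/negP: rN; apply; suff -> : r = 1 by exact: unitr1.
by apply: (mulIf g0); rewrite mul1r -gr.
Qed.

Lemma power_divisor_property_of_API :
  is_ideal (@nonunits D) -> API_domain D -> power_divisor_property D.
Proof.
move=> NI api S SS; have [[d Sd] Snz] := SS.
have [n [n0 [g Tg]]] := api S SS.
have TgX a : S a -> divides g (a ^+ n) by move=> Sa; apply/Tg => I _; apply; exists a.
have g0 : g != 0.
  apply/eqP=> g0; have [c] := TgX d Sd; rewrite g0 mulr0 => /eqP.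
  by rewrite expf_eq0 n0 (negbTE (Snz d Sd)).
have [_ [a0 [Sa0 ->]] [s sU a0s]] := generator_unit_cofactor NI g0 Tg.
exists n; split=> //; exists a0; split=> // a Sa; have [c ->] := TgX a Sa.
by exists (c * s^-1); rewrite a0s -mulrA (mulrA s^-1) mulVr ?mul1r.
Qed.

End PowerDivisors.

Theorem theorem4 (D : idomainType) :
  (quasilocal D /\ API_domain D) <->
  (forall S : D -> Prop, nonempty_nonzero_subset S ->
     exists n : nat, (0 < n)%N /\
       exists a0 : D, S a0 /\ forall a : D, S a -> divides (a0 ^+ n) (a ^+ n)).
Proof.
split=> [[/quasilocalP NI api] | pdp].
  exact: power_divisor_property_of_API.
split; last exact: API_of_power_divisor_property.
exact/quasilocalP/nonunits_ideal/unit_or_unit_subr.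
Qed.
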